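(* Let $p$ be a prime, let $n,m$ be positive integers, let $F:\mathbb{F}_{p^n}\to\mathbb{F}_{p^m}$ be a function and let $\theta>0$. Let $G_F=\{(x,F(x)) : x\in\mathbb{F}_{p^n}\}\subseteq H=\mathbb{F}_{p^n}\times\mathbb{F}_{p^m}$ (additive group). Then $G_F$ is a partial geometric difference set in $H$ with parameters $(p^{n+m},p^n;\alpha,\beta)$ for some constants $\alpha,\beta$ with $\beta-\alpha=\theta$ if and only if $|\widehat{F_b}(a)|\in\{0,\sqrt{\theta}\}$ for all $b\in\mathbb{F}_{p^m}^*$ and all $a\in\mathbb{F}_{p^n}$. Moreover, in this case $\theta=p^{n+s}$ for some integer $0\le s\le n$, and $\alpha=p^{2n-m}-p^{n+s-m}$, $\beta=p^{n+s}+p^{2n-m}-p^{n+s-m}$.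
   Context: $\zeta_p=e^{2\pi i/p}$ and $Tr_n(z)=\sum_{i=0}^{n-1}z^{p^i}$ is the absolute trace of $\mathbb{F}_{p^n}$ (similarly $Tr_m$). For $b\in\mathbb{F}_{p^m}^*$ the component function is $F_b(x)=Tr_m(bF(x))$, and its Walsh transform is $\widehat{F_b}(a)=\sum_{x\in\mathbb{F}_{p^n}}\zeta_p^{F_b(x)-Tr_n(ax)}$ for $a\in\mathbb{F}_{p^n}$. Partial geometric difference set: let $G$ be an abelian group of order $v$ (written additively) and $S\subseteq G$ with $|S|=k$, where $v>k>2$. For $g\in G$ let $\delta(g)=|\{(s,t)\in S\times S: g=s-t\}|$. $S$ is a partial geometric difference set (PGDS) with parameters $(v,k;\alpha,\beta)$ if for every $x\in G$, $\sum_{y\in S}\delta(x-y)=\alpha$ when $x\notin S$ and $=\beta$ when $x\in S$. *)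

From HB Require Import structures.
From mathcomp Require Import all_boot all_order all_algebra all_field.
Set Implicit Arguments. Unset Strict Implicit. Unset Printing Implicit Defensive.
Import Order.TTheory GRing.Theory Num.Theory.
Local Open Scope ring_scope.

(* zeta_p = e^{2 pi i / p}, as an element of algC.  In algC, [p.-root (-1)]
   is the p-th root of -1 of minimal non-negative argument, i.e. e^{i pi/p}
   (for p > 1), so its square is e^{2 pi i/p}. *)
Definition zeta (p : nat) : algC := (p.-root (-1)) ^+ 2.

Definition abs_tr (K : finFieldType) (p k : nat) (z : K) : K :=
  \sum_(i < k) z ^+ (p ^ i).

(* the integer in {0,..,p-1} representing an element of the prime field F_p
   inside K (the trace takes values there) *)
Definition fp_idx (K : finFieldType) (p : nat) (t : K) : nat :=
  index t [seq (i%:R : K) | i <- iota 0 p].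

Definition zpow (K : finFieldType) (p : nat) (t : K) : algC :=
  zeta p ^+ fp_idx p t.

(* Walsh transform of the component function F_b = Tr_m(b F(x)) at a:
   sum_x zeta^(Tr_m(b F x) - Tr_n(a x)) *)
Definition walsh (K L : finFieldType) (p n m : nat) (F : K -> L) (b : L) (a : K)
  : algC :=
  \sum_(x : K) zpow p (abs_tr p m (b * F x)) / zpow p (abs_tr p n (a * x)).

Definition pgds_delta (G : finZmodType) (S : {set G}) (g : G) : nat :=
  #|[set st : G * G | [&& st.1 \in S, st.2 \in S & g == st.1 - st.2]]|.

Definition is_pgds (G : finZmodType) (S : {set G}) (v k alpha beta : nat) : Prop :=
  [/\ #|G| = v, #|S| = k, (k < v)%N &
      forall x : G,
        (\sum_(y in S) pgds_delta S (x - y)%R)%N = (if x \in S then beta else alpha)].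

Definition prodH (K L : finFieldType) := (K * L)%type.
HB.instance Definition _ (K L : finFieldType) := GRing.Zmodule.on (prodH K L).
HB.instance Definition _ (K L : finFieldType) := Finite.on (prodH K L).

Definition graphF (K L : finFieldType) (F : K -> L) : {set prodH K L} :=
  [set ((x, F x) : prodH K L) | x : K].

From HB Require Import structures.
From mathcomp Require Import all_boot all_order all_algebra all_field.
From mathcomp Require Import zify ring.
Import Order.TTheory GRing.Theory Num.Theory.
Local Open Scope ring_scope.

Set Implicit Arguments.
Unset Strict Implicit.
Unset Printing Implicit Defensive.

(* The characters of H = F_{p^n} x F_{p^m} are
   chi_{a,b}(u, v) = zeta^(Tr_m(b v) + Tr_n(a u)), and the count
   sum_{y in G_F} delta(x - y) in the PGDS condition is the convolution
   1_G * 1_G * 1_{-G}, whose Fourier coefficient at chi_{a,b} is C |C|^2 with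
   C = sum_x chi_{a,b}(x, F x).  For b != 0, C is the Walsh coefficient of F_b
   at -a; for b = 0 and a != 0 it vanishes.  So G_F is a PGDS with
   beta - alpha = theta iff the count minus theta 1_G has no nontrivial Fourier
   coefficient, i.e. is constant, iff C (|C|^2 - theta) = 0 at every nontrivial
   character, i.e. |C| is 0 or sqrt theta.  By Parseval, theta times the number
   of nonzero Walsh coefficients of F_1 is p^(2n); as theta = |C|^2 is also an
   algebraic integer, theta = p^(n+s) with s <= n.  Finally the trivial
   character gives p^(2n) = alpha p^m + theta. *)

Lemma normC_eq0_or_sqrtCP (C : numClosedFieldType) (c t : C) : 0 <= t ->
  c * (`|c| ^+ 2 - t) = 0 <-> `|c| = 0 \/ `|c| = sqrtC t.
Proof.
move=> t_ge0; split.
  move/eqP; rewrite mulf_eq0 subr_eq0 -normr_eq0 => /orP [/eqP | /eqP c2].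
    by left.
  by right; rewrite -c2 exprCK.
case=> [/eqP | ->]; last by rewrite sqrtCK subrr mulr0.
by rewrite normr_eq0 => /eqP ->; rewrite mul0r.
Qed.

Lemma pfactor_of_mul_sqr p n t N : prime p ->
  (t * N = p ^ n * p ^ n)%N -> (N <= p ^ n)%N ->
  exists2 s, (s <= n)%N & t = (p ^ (n + s))%N.
Proof.
move=> pp tN N_le.
have /(dvdn_pfactor _ _ pp) [e e_le t_eq] : (t %| p ^ (n + n))%N.
  by rewrite expnD -tN dvdn_mulr.
have n_le_e : (n <= e)%N.
  have pn_gt0 : (0 < p ^ n)%N by rewrite expn_gt0 prime_gt0.
  rewrite -(leq_exp2l _ _ (prime_gt1 pp)) -(leq_pmul2r pn_gt0) -tN t_eq.
  by rewrite leq_mul2l N_le orbT.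
by exists (e - n)%N; [rewrite leq_subLR | rewrite subnKC].
Qed.

Lemma expfz_natB (R : fieldType) (x : R) (i j : nat) :
  x != 0 -> x ^ (i%:Z - j%:Z) = x ^+ i / x ^+ j.
Proof. by move=> x_neq0; rewrite expfzDr // -invr_expz. Qed.

Lemma zeta_prim_root p : prime p -> p.-primitive_root (zeta p).
Proof.
move=> pp; have p_gt1 := prime_gt1 pp; have p_gt0 := prime_gt0 pp.
set w := p.-root (-1 : algC).
have wp : w ^+ p = -1 by rewrite rootCK.
have zp : zeta p ^+ p = 1 by rewrite /zeta -exprM mulnC exprM wp sqrrN expr1n.
have w_neq1 : w != 1.
  apply: contra_eq_neq wp => ->.
  by rewrite expr1n -subr_eq0 opprK -mulr2n pnatr_eq0.
have w_neqN1 : w != -1.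
  by apply: contraFneq _ (rootC_lt0 (-1 : algC) p_gt1) => w1; rewrite -/w w1 ltrN10.
have z_neq1 : zeta p != 1 by rewrite /zeta sqrf_eq1 negb_or w_neq1.
have [d d_prim d_dvd] := prim_order_exists p_gt0 zp.
have d_neq1 : d != 1%N.
  by apply: contra_neq z_neq1 => d1; move: d_prim; rewrite d1 => /prim_expr_order.
by move/(prime_nt_dvdP pp d_neq1): d_dvd d_prim => ->.
Qed.

Section PrimeSubfield.
Variables (K : finFieldType) (p : nat).
Hypothesis pK : p \in [pchar K].

Let pp : prime p. Proof. exact: pcharf_prime pK. Qed.

Lemma natr_inj_pchar i j : (i < p)%N -> (j < p)%N -> (i%:R : K) = j%:R -> i = j.
Proof.
wlog le_ij : i j / (i <= j)%N.
  move=> W ip jp eij; case: (leqP i j) => [le_ij | /ltnW le_ji]; first exact: W.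
  exact/esym/W.
move=> _ jp /eqP; rewrite eq_sym -subr_eq0 -natrB // -(dvdn_pcharf pK).
by move/dvdn_leq; lia.
Qed.

Lemma uniq_natr_iota : uniq [seq (i%:R : K) | i <- iota 0 p].
Proof.
rewrite map_inj_in_uniq ?iota_uniq // => i j; rewrite !mem_iota.
exact: natr_inj_pchar.
Qed.

Lemma zpow_natr i : zpow p (i%:R : K) = zeta p ^+ i.
Proof.
have i_mod_lt : (i %% p < p)%N by rewrite ltn_mod prime_gt0.
rewrite /zpow; have ->: fp_idx p (i%:R : K) = (i %% p)%N.
  rewrite /fp_idx -(GRing.natr_mod_pchar pK).
  have ->: ((i %% p)%:R : K) = nth 0 [seq (i%:R : K) | i <- iota 0 p] (i %% p).
    by rewrite (nth_map 0%N) ?size_iota // nth_iota.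
  by rewrite index_uniq ?uniq_natr_iota ?size_map ?size_iota.
by rewrite expr_mod // prim_expr_order ?zeta_prim_root.
Qed.

(* The elements fixed by Frobenius are roots of X^p - X, which already has the
   p roots i%:R. *)
Lemma frobenius_fixed_natr (t : K) : t ^+ p = t -> exists i, t = i%:R.
Proof.
move=> tp; set nats := [seq (i%:R : K) | i <- iota 0 p].
have [/mapP [i _ ->] | t_notin] := boolP (t \in nats); first by exists i.
pose P : {poly K} := 'X^p - 'X.
have size_P : size P = p.+1.
  by rewrite size_polyDl size_polyXn // size_polyN size_polyX ltnS prime_gt1.
have rootP x : root P x = (x ^+ p == x) by rewrite /root !hornerE subr_eq0.
have P_neq0 : P != 0 by rewrite -size_poly_eq0 size_P.
have roots_P : all (root P) (t :: nats).
  rewrite /= rootP tp eqxx; apply/allP => _ /mapP [i _ ->].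
  by rewrite rootP -pFrobenius_autE pFrobenius_aut_nat.
have := max_poly_roots P_neq0 roots_P.
by rewrite /= t_notin uniq_natr_iota size_map size_iota size_P ltnn => /(_ isT).
Qed.

End PrimeSubfield.

Section AbsoluteTrace.
Variables (K : finFieldType) (p k : nat).
Hypotheses (pK : p \in [pchar K]) (cardK : #|K| = (p ^ k)%N) (k_gt0 : (0 < k)%N).

Let pp : prime p. Proof. exact: pcharf_prime pK. Qed.

Lemma abs_trD (x y : K) : abs_tr p k (x + y) = abs_tr p k x + abs_tr p k y.
Proof.
rewrite /abs_tr -big_split; apply: eq_bigr => i _; rewrite exprDn_pchar //.
by rewrite pnatX (pnatE _ pp) pK.
Qed.

Lemma abs_tr0 : abs_tr p k (0 : K) = 0.
Proof. by apply: (addrI (abs_tr p k 0)); rewrite -abs_trD !addr0. Qed.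

Lemma abs_tr_frobenius (z : K) : abs_tr p k z ^+ p = abs_tr p k z.
Proof.
rewrite -(pFrobenius_autE pK) rmorph_sum /=.
under eq_bigr do rewrite pFrobenius_autE -exprM -expnSr.
case: k cardK k_gt0 => // k' cardK' _.
rewrite /abs_tr big_ord_recr big_ord_recl /= expn0 expr1 addrC.
by rewrite -cardK' expf_card.
Qed.

Lemma abs_tr_natr (z : K) : exists i, abs_tr p k z = i%:R.
Proof. exact/(frobenius_fixed_natr pK)/abs_tr_frobenius. Qed.

(* Tr is a nonzero polynomial of degree p^(k-1) < #|K|, so it has a non-root. *)
Lemma exists_abs_tr_neq0 : exists z : K, abs_tr p k z != 0.
Proof.
have [/existsP // | /existsPn tr_eq0] := boolP [exists z : K, abs_tr p k z != 0].
exfalso.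
case: k cardK k_gt0 tr_eq0 => // k' cardK' _ tr_eq0.
pose Q : {poly K} := \sum_(i < k'.+1) 'X^(p ^ i).
have Q_neq0 : Q != 0.
  apply/negP => /eqP /(congr1 (fun q : {poly K} => q`_(p ^ k'))).
  rewrite coef0 /Q coef_sum (bigD1 ord_max) //= coefXn eqxx big1 ?addr0.
    by move/eqP; rewrite oner_eq0.
  move=> i /eqP i_neq; rewrite coefXn eqn_exp2l ?prime_gt1 //.
  by case: eqP => // ei; case: i_neq; apply: val_inj => /=.
have size_Q : (size Q <= (p ^ k').+1)%N.
  apply: leq_trans (size_sum _ _ _) _; apply/bigmax_leqP => i _.
  by rewrite size_polyXn ltnS leq_exp2l ?prime_gt1 // -ltnS.
have roots_Q : all (root Q) (enum K).
  apply/allP => z _; rewrite /root horner_sum.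
  under eq_bigr do rewrite hornerXn.
  exact: negbNE (tr_eq0 z).
have := max_poly_roots Q_neq0 roots_Q (enum_uniq _).
rewrite -cardE cardK' => /leq_trans /(_ size_Q).
rewrite expnS ltnS -[X in (_ <= X)%N]mul1n leq_pmul2r ?expn_gt0 ?prime_gt0 //.
by rewrite leqNgt prime_gt1.
Qed.
End AbsoluteTrace.

Section TraceCharacter.
Variables (K : finFieldType) (p k : nat).
Hypotheses (pK : p \in [pchar K]) (cardK : #|K| = (p ^ k)%N) (k_gt0 : (0 < k)%N).

Let pp : prime p. Proof. exact: pcharf_prime pK. Qed.

Definition tr_char (z : K) : algC := zpow p (abs_tr p k z).

Lemma tr_charE z : exists i, tr_char z = zeta p ^+ i.
Proof.
have [i tr_i] := abs_tr_natr pK cardK k_gt0 z.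
by exists i; rewrite /tr_char tr_i zpow_natr.
Qed.

Lemma tr_charD x y : tr_char (x + y) = tr_char x * tr_char y.
Proof.
rewrite /tr_char abs_trD //.
have [i ->] := abs_tr_natr pK cardK k_gt0 x; have [j ->] := abs_tr_natr pK cardK k_gt0 y.
by rewrite -natrD !zpow_natr // exprD.
Qed.

Lemma tr_char0 : tr_char 0 = 1.
Proof. by rewrite /tr_char abs_tr0 // -(mulr0n 1) (zpow_natr pK 0). Qed.

Lemma tr_char_unity z : p.-unity_root (tr_char z).
Proof.
have [i ->] := tr_charE z.
by rewrite unity_rootE -exprM mulnC exprM (prim_expr_order (zeta_prim_root pp)) expr1n.
Qed.

Lemma norm_tr_char z : `|tr_char z| = 1.
Proof.
apply/eqP; rewrite -(pexpr_eq1 (prime_gt0 pp)) ?normr_ge0 // -normrX.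
by move/unity_rootP: (tr_char_unity z) => ->; rewrite normr1.
Qed.

Lemma tr_charN z : tr_char (- z) = (tr_char z)^*.
Proof.
have tr_neq0 : tr_char z != 0 by rewrite -normr_eq0 norm_tr_char oner_eq0.
apply: (mulfI tr_neq0); rewrite -tr_charD subrr tr_char0.
by rewrite -normCK norm_tr_char expr1n.
Qed.

Lemma tr_char_eq1 z : (tr_char z == 1) = (abs_tr p k z == 0).
Proof.
rewrite /tr_char; have [i ->] := abs_tr_natr pK cardK k_gt0 z.
by rewrite zpow_natr // -(prim_order_dvd (zeta_prim_root pp)) (dvdn_pcharf pK).
Qed.

(* Translating by an element of nonzero trace multiplies the sum by a value
   other than 1. *)
Lemma sum_tr_char (a : K) :
  \sum_(x : K) tr_char (a * x) = if a == 0 then #|K|%:R else 0.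
Proof.
have [-> | a_neq0] := eqVneq a 0.
  by under eq_bigr do rewrite mul0r tr_char0; rewrite sumr_const.
have [z tr_z] := exists_abs_tr_neq0 pK cardK k_gt0.
set S := \sum_(x : K) _.
have S_invariant : S = S * tr_char z.
  rewrite {1}/S (reindex_inj (addIr (z / a))) mulr_suml.
  by apply: eq_bigr => x _; rewrite mulrDr tr_charD mulrCA divff // mulr1.
apply/eqP; move/eqP: S_invariant; rewrite -subr_eq0 -{1}(mulr1 S) -mulrBr.
by rewrite mulf_eq0 subr_eq0 [1 == _]eq_sym tr_char_eq1 (negPf tr_z) orbF.
Qed.

End TraceCharacter.

Section CharactersOfH.
Variables (p n m : nat) (K L : finFieldType).
Hypotheses (pp : prime p) (n_gt0 : (0 < n)%N) (m_gt0 : (0 < m)%N).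
Hypotheses (cardK : #|K| = (p ^ n)%N) (cardL : #|L| = (p ^ m)%N).

Let pK : p \in [pchar K]. Proof. exact: card_finPcharP cardK pp. Qed.
Let pL : p \in [pchar L]. Proof. exact: card_finPcharP cardL pp. Qed.

Local Notation H := (prodH K L).

Definition chi (a : K) (b : L) (h : H) : algC :=
  tr_char p m (b * h.2) * tr_char p n (a * h.1).

Lemma chiD a b (h1 h2 : H) : chi a b (h1 + h2) = chi a b h1 * chi a b h2.
Proof.
by rewrite /chi /= !mulrDr (tr_charD pK cardK n_gt0) (tr_charD pL cardL m_gt0); ring.
Qed.

Lemma chiN a b (h : H) : chi a b (- h) = (chi a b h)^*.
Proof.
by rewrite /chi /= !mulrN (tr_charN pK cardK n_gt0) (tr_charN pL cardL m_gt0) rmorphM.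
Qed.

Lemma chi_principal (h : H) : chi 0 0 h = 1.
Proof. by rewrite /chi !mul0r (tr_char0 n pK) (tr_char0 m pL) mulr1. Qed.

Lemma chiC a b u v : chi a b (u, v) = chi u v (a, b).
Proof. by rewrite /chi /= [b * _]mulrC [a * _]mulrC. Qed.

Lemma chi_Aint a b h : chi a b h \in Aint.
Proof.
by rewrite rpredM // (Aint_unity_root (prime_gt0 pp)) ?tr_char_unity.
Qed.

Lemma sum_chi a b :
  \sum_(h : H) chi a b h = if (a == 0) && (b == 0) then (#|K| * #|L|)%:R else 0.
Proof.
rewrite -(pair_big xpredT xpredT (fun u v => chi a b (u, v))) /chi /=.
under eq_bigr do rewrite -mulr_suml.
rewrite -mulr_sumr (sum_tr_char pL cardL m_gt0) (sum_tr_char pK cardK n_gt0).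
by case: (a == 0); case: (b == 0); rewrite ?mulr0 ?mul0r // natrM mulrC.
Qed.

Lemma sum_chi_dual (h : H) :
  \sum_(a : K) \sum_(b : L) chi a b h = if h == 0 then (#|K| * #|L|)%:R else 0.
Proof.
case: h => u v; under eq_bigr do under eq_bigr do rewrite chiC.
by rewrite (pair_big xpredT xpredT (fun a b => chi u v (a, b))) sum_chi.
Qed.

Definition fourier (f : H -> algC) (a : K) (b : L) : algC :=
  \sum_(h : H) f h * chi a b h.

Lemma fourier_inversion (f : H -> algC) (h : H) :
  (#|K| * #|L|)%:R * f h = \sum_(a : K) \sum_(b : L) fourier f a b * chi a b (- h).
Proof.
transitivity (\sum_(g : H) f g * \sum_(a : K) \sum_(b : L) chi a b (g - h)).
  rewrite (bigD1 h) //= subrr sum_chi_dual eqxx mulrC big1 ?addr0 // => g g_neq_h.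
  by rewrite sum_chi_dual subr_eq0 (negPf g_neq_h) mulr0.
under eq_bigr do rewrite mulr_sumr; rewrite exchange_big; apply: eq_bigr => a _.
under eq_bigr do rewrite mulr_sumr; rewrite exchange_big; apply: eq_bigr => b _.
by rewrite mulr_suml; apply: eq_bigr => g _; rewrite chiD mulrA.
Qed.

Lemma fourier_principal_const (f : H -> algC) :
  (forall a b, (a != 0) || (b != 0) -> fourier f a b = 0) ->
  forall h, (#|K| * #|L|)%:R * f h = fourier f 0 0.
Proof.
move=> f_hat0 h; rewrite fourier_inversion (bigD1 0) //= [X in _ + X]big1.
  rewrite addr0 (bigD1 0) //= [X in _ + X]big1 ?addr0 ?chi_principal ?mulr1 //.
  by move=> b b_neq0; rewrite f_hat0 ?b_neq0 ?orbT ?mul0r.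
by move=> a a_neq0; apply: big1 => b _; rewrite f_hat0 ?a_neq0 ?mul0r.
Qed.

Variable F : K -> L.

Local Notation G := (graphF F).

Lemma graph_inj : injective (fun x => (x, F x) : H).
Proof. by move=> x y []. Qed.

Lemma card_graphF : #|G| = #|K|.
Proof. by rewrite card_imset ?cardT -?cardE //; apply: graph_inj. Qed.

Lemma big_graphF (f : H -> algC) : \sum_(y in G) f y = \sum_(x : K) f (x, F x).
Proof.
by rewrite big_imset /=; [apply: eq_bigl | move=> x y _ _; apply: graph_inj].
Qed.

Definition graph_coef (a : K) (b : L) : algC := \sum_(x : K) chi a b (x, F x).

Lemma fourier_graphF a b : fourier (fun h => (h \in G)%:R) a b = graph_coef a b.
Proof.
rewrite /fourier (bigID (mem G)) /= [X in _ + X]big1 ?addr0 => [|h /negPf->].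
  by rewrite /graph_coef -big_graphF; apply: eq_bigr => h ->; rewrite mul1r.
by rewrite mul0r.
Qed.

Lemma pgds_deltaE (g : H) : (pgds_delta G g)%:R =
  \sum_(x1 : K) \sum_(x2 : K) (g == (x1, F x1) - (x2, F x2))%:R :> algC.
Proof.
under eq_bigr do rewrite -(big_graphF (fun t => (g == _ - t)%:R)).
rewrite -(big_graphF (fun s => \sum_(t in G) (g == s - t)%:R)) pair_big_dep /=.
rewrite /pgds_delta -sum1_card natr_sum big_mkcond [RHS]big_mkcond /=.
apply: eq_bigr => -[s t] _; rewrite !inE /=.
by case: (s \in G); case: (t \in G); case: (g == _).
Qed.

Definition pgds_count (h : H) : nat := (\sum_(y in G) pgds_delta G (h - y)%R)%N.

Lemma fourier_pgds_count a b :
  fourier (fun h => (pgds_count h)%:R) a b = graph_coef a b * `|graph_coef a b| ^+ 2.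
Proof.
have pick (y w : H) : \sum_(h : H) (h - y == w)%:R * chi a b h = chi a b (w + y).
  rewrite (bigD1 (w + y)) //= addrK eqxx mul1r big1 ?addr0 // => h h_neq.
  by rewrite subr_eq (negPf h_neq) mul0r.
rewrite normCK /fourier /graph_coef rmorph_sum !mulr_suml.
under eq_bigr do rewrite /pgds_count natr_sum big_graphF mulr_suml.
rewrite exchange_big; apply: eq_bigr => x3 _; rewrite mulr_sumr.
under eq_bigr do rewrite pgds_deltaE mulr_suml.
rewrite exchange_big; apply: eq_bigr => x1 _; rewrite !mulr_sumr.
under eq_bigr do rewrite mulr_suml.
rewrite exchange_big; apply: eq_bigr => x2 _.
by rewrite pick !chiD chiN mulrC.
Qed.

Lemma walsh_graph_coef b a : walsh p n m F b a = graph_coef (- a) b.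
Proof.
apply: eq_bigr => x _; rewrite /chi /= mulNr (tr_charN pK cardK n_gt0).
by rewrite invC_norm (norm_tr_char pK cardK n_gt0) expr1n invr1 mul1r.
Qed.

Lemma graph_coef_a0 a : a != 0 -> graph_coef a 0 = 0.
Proof.
move=> a_neq0; rewrite /graph_coef /chi /=.
under eq_bigr do rewrite mul0r (tr_char0 m pL) mul1r.
by rewrite (sum_tr_char pK cardK n_gt0) (negPf a_neq0).
Qed.

Lemma graph_coef00 : graph_coef 0 0 = #|K|%:R.
Proof.
rewrite /graph_coef; under eq_bigr do rewrite chi_principal.
by rewrite sumr_const cardT -cardE.
Qed.

Lemma graph_coef_Aint a b : graph_coef a b \in Aint.
Proof. by apply: rpred_sum => x _; apply: chi_Aint. Qed.

Lemma parseval_graph_coef : \sum_(a : K) `|graph_coef a 1| ^+ 2 = (#|K| * #|K|)%:R.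
Proof.
have sum_a x1 x2 : \sum_(a : K) chi a 1 (x1, F x1) * (chi a 1 (x2, F x2))^* =
                   (x1 == x2)%:R * #|K|%:R.
  under eq_bigr do rewrite -chiN -chiD /chi /= mul1r.
  rewrite -mulr_sumr; under eq_bigr do rewrite mulrC.
  rewrite (sum_tr_char pK cardK n_gt0) subr_eq0.
  have [-> | _] := eqVneq x1 x2; rewrite ?mulr0 ?mul0r // subrr.
  by rewrite (tr_char0 m pL) !mul1r.
under eq_bigr do rewrite normCK rmorph_sum mulr_suml; rewrite exchange_big /=.
under eq_bigr do (under eq_bigr do rewrite mulr_sumr; rewrite exchange_big /=).
under eq_bigr do under eq_bigr do rewrite sum_a.
transitivity (\sum_(x1 : K) (#|K|%:R : algC)); last by rewrite sumr_const natrM mulr_natr.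
apply: eq_bigr => x1 _; rewrite (bigD1 x1) //= eqxx mul1r big1 ?addr0 // => x2.
by rewrite eq_sym => /negPf ->; rewrite mul0r.
Qed.

Definition pgds_excess (t : algC) (h : H) : algC := (pgds_count h)%:R - t * (h \in G)%:R.

Lemma fourier_pgds_excess t a b :
  fourier (pgds_excess t) a b = graph_coef a b * (`|graph_coef a b| ^+ 2 - t).
Proof.
rewrite mulrBr -fourier_pgds_count [_ * t]mulrC -fourier_graphF /fourier.
by rewrite mulr_sumr -sumrB; apply: eq_bigr => h _; rewrite /pgds_excess mulrBl -mulrA.
Qed.

Lemma is_pgds_excess v k alpha beta : is_pgds G v k alpha beta ->
  forall h, pgds_excess (beta%:R - alpha%:R) h = alpha%:R.
Proof.
case=> _ _ _ count_eq h; rewrite /pgds_excess /pgds_count count_eq.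
by case: (h \in G); rewrite ?mulr1 ?mulr0 ?subr0 // opprB addrC subrK.
Qed.

Definition plateaued (t : algC) : Prop :=
  forall (b : L) (a : K), b != 0 ->
    `|walsh p n m F b a| = 0 \/ `|walsh p n m F b a| = sqrtC t.

Lemma pgds_plateaued alpha beta t :
  is_pgds G (p ^ (n + m)) (p ^ n) alpha beta -> beta%:R - alpha%:R = t ->
  0 <= t -> plateaued t.
Proof.
move=> G_pgds <- t_ge0 b a b_neq0; rewrite walsh_graph_coef -normC_eq0_or_sqrtCP //.
rewrite -fourier_pgds_excess /fourier.
under eq_bigr do rewrite (is_pgds_excess G_pgds).
by rewrite -mulr_sumr sum_chi (negPf b_neq0) andbF mulr0.
Qed.

Lemma pgds_of_excess_const t :
  (forall h h', pgds_excess t h = pgds_excess t h') ->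
  exists alpha beta : nat,
    is_pgds G (p ^ (n + m)) (p ^ n) alpha beta /\ beta%:R - alpha%:R = t.
Proof.
move=> excess_eq; pose h0 : H := (0, F 0 + 1).
have h0_notin : h0 \notin G.
  apply/imsetP => -[x _ [x0 e]]; move: e; rewrite -x0 => /eqP.
  by rewrite -subr_eq0 addrAC subrr add0r oner_eq0.
have G0_in : ((0, F 0) : H) \in G by apply/imsetP; exists 0.
exists (pgds_count h0), (pgds_count (0, F 0)); split; last first.
  have := excess_eq (0, F 0) h0; rewrite /pgds_excess G0_in (negPf h0_notin).
  by rewrite mulr1 mulr0 subr0 => <-; rewrite opprB addrC subrK.
split.
- by rewrite card_prod cardK cardL expnD.
- by rewrite card_graphF cardK.
- by rewrite ltn_exp2l ?prime_gt1 // -{1}(addn0 n) ltn_add2l.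
move=> x; apply/eqP; rewrite -(eqr_nat algC) -/(pgds_count x); apply/eqP.
have [x_in | x_notin] := boolP (x \in G).
  by have := excess_eq x (0, F 0); rewrite /pgds_excess x_in G0_in; apply: addIr.
have := excess_eq x h0; rewrite /pgds_excess (negPf x_notin) (negPf h0_notin).
by rewrite !mulr0 !subr0.
Qed.

Lemma plateaued_pgds t : 0 <= t -> plateaued t ->
  exists alpha beta : nat,
    is_pgds G (p ^ (n + m)) (p ^ n) alpha beta /\ beta%:R - alpha%:R = t.
Proof.
move=> t_ge0 F_plateaued; apply: pgds_of_excess_const.
have excess_const h : (#|K| * #|L|)%:R * pgds_excess t h = fourier (pgds_excess t) 0 0.
  apply: fourier_principal_const => a b ab_neq0; rewrite fourier_pgds_excess.
  have [b0 | b_neq0] := eqVneq b 0.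
    by move: ab_neq0; rewrite b0 eqxx orbF => /graph_coef_a0 ->; rewrite mul0r.
  apply/normC_eq0_or_sqrtCP; rewrite // -[a]opprK -walsh_graph_coef.
  exact: F_plateaued.
have card_neq0 : (#|K| * #|L|)%:R != 0 :> algC.
  by rewrite pnatr_eq0 cardK cardL -expnD -lt0n expn_gt0 prime_gt0.
by move=> h h'; apply: (mulfI card_neq0); rewrite !excess_const.
Qed.

Lemma plateaued_amplitude t : 0 < t -> plateaued t ->
  exists2 s, (s <= n)%N & t = (p ^ (n + s))%:R.
Proof.
move=> t_gt0 F_plateaued.
have sqr_coef a : `|graph_coef a 1| ^+ 2 = t *+ (graph_coef a 1 != 0).
  have := F_plateaued 1 (- a) (oner_neq0 _); rewrite walsh_graph_coef opprK.
  case=> [/eqP | C_norm]; first by rewrite normr_eq0 => /eqP ->; rewrite normr0 expr0n eqxx.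
  by rewrite C_norm sqrtCK -normr_eq0 C_norm sqrtC_eq0 (gt_eqF t_gt0).
set N := #|[pred a | graph_coef a 1 != 0]|.
have tN : t *+ N = (#|K| * #|K|)%:R.
  rewrite -parseval_graph_coef; under eq_bigr do rewrite sqr_coef mulrb.
  by rewrite -big_mkcond sumr_const.
have N_gt0 : (0 < N)%N.
  have K_gt0 : (0 < #|K|)%N by rewrite cardK expn_gt0 prime_gt0.
  rewrite lt0n; apply/eqP => N0; move/eqP: tN; rewrite N0 mulr0n eq_sym pnatr_eq0.
  by rewrite muln_eq0 orbb eqn0Ngt K_gt0.
have [a0] := card_gt0P N_gt0; rewrite inE => coef_a0.
have t_Aint : t \in Aint.
  have := sqr_coef a0; rewrite coef_a0 mulr1n normCK => <-.
  by rewrite rpredM ?Aint_aut ?graph_coef_Aint.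
have t_rat : t \in Crat.
  have N_neq0 : (N%:R : algC) != 0 by rewrite pnatr_eq0 -lt0n.
  by rewrite -[t](mulfK N_neq0) mulr_natr tN rpred_div ?rpred_nat.
have /natrP [tt t_tt] : t \is a Num.nat by rewrite natrEint Cint_rat_Aint //= ltW.
have ttN : (tt * N = p ^ n * p ^ n)%N.
  by apply/eqP; rewrite -(eqr_nat algC) natrM -t_tt mulr_natr tN cardK.
have N_le : (N <= p ^ n)%N by rewrite -cardK max_card.
have [s s_le tt_eq] := pfactor_of_mul_sqr pp ttN N_le.
by exists s; rewrite // t_tt tt_eq.
Qed.

Lemma pgds_alpha alpha beta s :
  is_pgds G (p ^ (n + m)) (p ^ n) alpha beta ->
  beta%:R - alpha%:R = (p ^ (n + s))%:R :> algC ->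
  alpha%:R = (p%:R : algC) ^ ((2 * n)%:Z - m%:Z) - (p%:R : algC) ^ ((n + s)%:Z - m%:Z).
Proof.
move=> G_pgds t_eq.
have := fourier_pgds_excess (beta%:R - alpha%:R) 0 0.
rewrite /fourier; under eq_bigr do rewrite (is_pgds_excess G_pgds).
rewrite -mulr_sumr sum_chi !eqxx /= graph_coef00 normr_nat t_eq cardK cardL !natrX.
set P : algC := p%:R; have P_neq0 : P != 0 by rewrite pnatr_eq0 -lt0n prime_gt0.
rewrite !expfz_natB // natrM !natrX -/P => total.
have Pn_neq0 : P ^+ n != 0 by rewrite expf_neq0.
have Pm_neq0 : P ^+ m != 0 by rewrite expf_neq0.
apply: (mulIf (mulf_neq0 Pn_neq0 Pm_neq0)); rewrite total.
by rewrite mul2n -addnn !exprD; field.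
Qed.

End CharactersOfH.

Theorem mainTheorem1 (p n m : nat) (K L : finFieldType)
    (hp : prime p) (hn : (0 < n)%N) (hm : (0 < m)%N)
    (hK : #|K| = (p ^ n)%N) (hL : #|L| = (p ^ m)%N)
    (F : K -> L) (theta : algC) (htheta : 0 < theta) :
  ((exists alpha beta : nat,
       is_pgds (graphF F) (p ^ (n + m)) (p ^ n) alpha beta
       /\ beta%:R - alpha%:R = theta)
   <->
   (forall (b : L) (a : K), b != 0 ->
       `|walsh p n m F b a| = 0 \/ `|walsh p n m F b a| = sqrtC theta))
  /\
  ((forall (b : L) (a : K), b != 0 ->
       `|walsh p n m F b a| = 0 \/ `|walsh p n m F b a| = sqrtC theta) ->
   exists s : nat, [/\ (s <= n)%N,
     theta = (p ^ (n + s))%:R &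
     forall alpha beta : nat,
       is_pgds (graphF F) (p ^ (n + m)) (p ^ n) alpha beta ->
       beta%:R - alpha%:R = theta ->
       alpha%:R = (p%:R : algC) ^ ((2 * n)%:Z - m%:Z)
                  - (p%:R : algC) ^ ((n + s)%:Z - m%:Z)
       /\ beta%:R = (p ^ (n + s))%:R + (p%:R : algC) ^ ((2 * n)%:Z - m%:Z)
                  - (p%:R : algC) ^ ((n + s)%:Z - m%:Z)]).
Proof.
split.
  split=> [[alpha [beta [G_pgds t_eq]]] | F_plateaued].
    exact: (pgds_plateaued hp hn hm hK hL G_pgds t_eq (ltW htheta)).
  exact: (plateaued_pgds hp hn hm hK hL (ltW htheta) F_plateaued).
move=> F_plateaued.
have [s s_le t_eq] := plateaued_amplitude hp hn hm hK hL htheta F_plateaued.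
exists s; split=> // alpha beta G_pgds ab_eq.
have alpha_eq := pgds_alpha hp hn hm hK hL G_pgds (etrans ab_eq t_eq).
by split=> //; rewrite -addrA -alpha_eq -t_eq -ab_eq subrK.
Qed.
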